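(* Let $P$ be the feasible set of the rational mixed-integer program $\min\{c^Tx : Ax\le b,\ \ell\le x\le u,\ x_j\in\mathbb{Z} \text{ for all } j\in I\}$, where $A\in\mathbb{Q}^{m\times n}$, $c\in\mathbb{Q}^n$, $b\in\mathbb{Q}^m$, $\ell,u\in(\mathbb{Q}\cup\{\pm\infty\})^n$, $I\subseteq\{1,\dots,n\}$. Let $a^Tx\le \beta$ and $g^Tx\le d$ be two valid, $\mathbb{F}$-representable inequalities for $P$, and let $\lambda\in\mathbb{F}$ with $\lambda>0$. Set $\alpha_i:=a_i+\lambda g_i$ for $i=1,\dots,n$, and let $U,L\subseteq\{1,\dots,n\}$ be disjoint index sets such that $u_i<\infty$ for all $i\in U$, $\ell_i>-\infty$ for all $i\in L$, and $\alpha_i=0$ for all $i\notin U\cup L$. Then the inequality $$\sum_{i\in U}\overline{\alpha_i}\,x_i+\sum_{i\in L}\underline{\alpha_i}\,x_i\;\le\;\overline{\beta+\lambda d+\sum_{i\in U,\,u_i>0}(\overline{\alpha_i}-\underline{\alpha_i})\,u_i+\sum_{i\in L,\,\ell_i<0}(\underline{\alpha_i}-\overline{\alpha_i})\,\ell_i}$$ is an $\mathbb{F}$-representable inequality valid for $P$ (a valid approximation of the aggregated inequality $(a+\lambda g)^Tx\le \beta+\lambda d$).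
   Context: An inequality is valid for $P$ if every point of $P$ satisfies it. $\mathbb{F}\subseteq\mathbb{Q}$ denotes a fixed set of floating-point numbers (e.g. IEEE double-precision numbers). For $x\in\mathbb{Q}$, $\overline{x}:=\min\{y\in\mathbb{F}: y>x\}$ and $\underline{x}:=\max\{y\in\mathbb{F}: y<x\}$ (assumed to exist for all numbers occurring). An inequality $a^Tx\le\beta$ is $\mathbb{F}$-representable if $a\in\mathbb{F}^n$ and $\beta\in\mathbb{F}$. *)

From HB Require Import structures.
From mathcomp Require Import all_boot all_order all_algebra.
From mathcomp Require Import constructive_ereal.
From Stdlib Require Import ClassicalEpsilon.
Set Implicit Arguments. Unset Strict Implicit. Unset Printing Implicit Defensive.
Import Order.TTheory GRing.Theory Num.Theory.
Local Open Scope ring_scope.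

(* The set F of floating-point numbers is modelled as a predicate on rat. *)

Definition is_rup (F : rat -> Prop) (x y : rat) : Prop :=
  F y /\ x < y /\ (forall z, F z -> x < z -> y <= z).
Definition is_rdn (F : rat -> Prop) (x y : rat) : Prop :=
  F y /\ y < x /\ (forall z, F z -> z < x -> z <= y).

Definition ex_rup F x := exists y, is_rup F x y.
Definition ex_rdn F x := exists y, is_rdn F x y.

(* overline x (meaningful when ex_rup F x holds) *)
Definition rup (F : rat -> Prop) (x : rat) : rat :=
  epsilon (inhabits x) (is_rup F x).
(* underline x (meaningful when ex_rdn F x holds) *)
Definition rdn (F : rat -> Prop) (x : rat) : rat :=
  epsilon (inhabits x) (is_rdn F x).

Definition mip_feasible (m n : nat) (A : 'I_m -> 'I_n -> rat) (b : 'I_m -> rat)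
  (l u : 'I_n -> \bar rat) (I : {set 'I_n}) (x : 'I_n -> rat) : Prop :=
  (forall j : 'I_m, \sum_(i < n) A j i * x i <= b j) /\
  (forall i : 'I_n, (l i <= (x i)%:E)%E /\ ((x i)%:E <= u i)%E) /\
  (forall j : 'I_n, j \in I -> exists z : int, x j = z%:~R).

Definition valid_ineq (n : nat) (P : ('I_n -> rat) -> Prop)
  (a : 'I_n -> rat) (beta : rat) : Prop :=
  forall x, P x -> \sum_(i < n) a i * x i <= beta.

Definition F_repr (F : rat -> Prop) (n : nat) (a : 'I_n -> rat) (beta : rat) : Prop :=
  (forall i, F (a i)) /\ F beta.

(** Rounding α_i up for i ∈ U (where x_i ≤ u_i) and down for i ∈ L (where
    x_i ≥ ℓ_i) changes the i-th term by (ᾱ_i − α_i) x_i ≤ (ᾱ_i − α_i) u_i,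
    which is at most (ᾱ_i − α̲_i) u_i when u_i > 0 and at most 0 otherwise;
    symmetrically for i ∈ L.  Adding these bounds to the aggregation
    (a + λ g)^T x ≤ β + λ d, valid because λ > 0, bounds the new left-hand
    side by exactly the quantity whose rounding up is the new right-hand
    side. *)
From HB Require Import structures.
From mathcomp Require Import all_boot all_order all_algebra.
From mathcomp Require Import constructive_ereal.
From mathcomp Require Import lra.
From Stdlib Require Import ClassicalEpsilon.
Set Implicit Arguments. Unset Strict Implicit. Unset Printing Implicit Defensive.
Import Order.TTheory GRing.Theory Num.Theory.
Local Open Scope ring_scope.

Lemma rupP F x : ex_rup F x -> is_rup F x (rup F x).
Proof. by move=> [y Hy]; apply: epsilon_spec; exists y. Qed.

Lemma rdnP F x : ex_rdn F x -> is_rdn F x (rdn F x).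
Proof. by move=> [y Hy]; apply: epsilon_spec; exists y. Qed.

Lemma rup_F F x : ex_rup F x -> F (rup F x).
Proof. by case/rupP. Qed.

Lemma rdn_F F x : ex_rdn F x -> F (rdn F x).
Proof. by case/rdnP. Qed.

Lemma rup_gt F x : ex_rup F x -> x < rup F x.
Proof. by case/rupP=> _ []. Qed.

Lemma rdn_lt F x : ex_rdn F x -> rdn F x < x.
Proof. by case/rdnP=> _ []. Qed.

Lemma le_fine (R : numDomainType) (r : R) (e : \bar R) :
  (r%:E <= e)%E -> (e < +oo)%E -> r <= fine e.
Proof. by case: e => [s| |] //=; rewrite ?lee_fin ?leeNy_eq. Qed.

Lemma fine_le (R : numDomainType) (r : R) (e : \bar R) :
  (e <= r%:E)%E -> (-oo < e)%E -> fine e <= r.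
Proof. by case: e => [s| |] //=; rewrite ?lee_fin ?leye_eq. Qed.

Lemma valid_ineq_aggregate n (P : ('I_n -> rat) -> Prop) a beta g d lambda :
  valid_ineq P a beta -> valid_ineq P g d -> 0 <= lambda ->
  valid_ineq P (fun i => a i + lambda * g i) (beta + lambda * d).
Proof.
move=> Ha Hg lam_ge0 x Px.
under eq_bigr do rewrite mulrDl -mulrA.
by rewrite big_split -mulr_sumr /= lerD ?ler_wpM2l ?Ha ?Hg.
Qed.

Lemma ler_round_up_mul (R : realDomainType) (alpha hi lo x ub : R) :
  alpha <= hi -> x <= ub -> (0 < ub -> lo <= alpha) ->
  hi * x <= alpha * x + (if 0 < ub then (hi - lo) * ub else 0).
Proof.
move=> alpha_le x_le lo_le.
have err_le : (hi - alpha) * x <= (hi - alpha) * ub.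
  by apply: ler_wpM2l; rewrite ?subr_ge0.
case: ifPn => [ub_gt0 | ].
  have : (hi - alpha) * ub <= (hi - lo) * ub.
    by apply: ler_wpM2r; [exact: ltW | rewrite lerD2l lerN2 lo_le].
  move: err_le; rewrite !mulrBl; lra.
rewrite -leNgt => ub_le0.
have : (hi - alpha) * ub <= 0 by rewrite mulr_ge0_le0 // subr_ge0.
move: err_le; rewrite !mulrBl; lra.
Qed.

Lemma ler_round_down_mul (R : realDomainType) (alpha hi lo x lb : R) :
  lo <= alpha -> lb <= x -> (lb < 0 -> alpha <= hi) ->
  lo * x <= alpha * x + (if lb < 0 then (lo - hi) * lb else 0).
Proof.
move=> lo_le lb_le hi_ge.
have := @ler_round_up_mul _ (- alpha) (- lo) (- hi) (- x) (- lb).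
rewrite !lerN2 oppr_gt0 => /(_ lo_le lb_le hi_ge).
by rewrite -opprD !mulrNN.
Qed.

Section RoundedCoefficients.

Variables (F : rat -> Prop) (n : nat) (U L : {set 'I_n}).
Variables (l u : 'I_n -> \bar rat) (alpha : 'I_n -> rat).
Hypothesis disjoint_UL : [disjoint U & L].
Hypothesis U_bounded : forall i, i \in U -> (u i < +oo)%E.
Hypothesis L_bounded : forall i, i \in L -> (-oo < l i)%E.
Hypothesis alpha_eq0 : forall i, i \notin U :|: L -> alpha i = 0.
Hypothesis ex_rup_U : forall i, i \in U -> ex_rup F (alpha i).
Hypothesis ex_rdn_U : forall i, i \in U -> 0 < fine (u i) -> ex_rdn F (alpha i).
Hypothesis ex_rdn_L : forall i, i \in L -> ex_rdn F (alpha i).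
Hypothesis ex_rup_L : forall i, i \in L -> fine (l i) < 0 -> ex_rup F (alpha i).

Definition rounded_coef i :=
  if i \in U then rup F (alpha i) else if i \in L then rdn F (alpha i) else 0.

Definition up_slack i :=
  if (i \in U) && (0 < fine (u i))
  then (rup F (alpha i) - rdn F (alpha i)) * fine (u i) else 0.

Definition down_slack i :=
  if (i \in L) && (fine (l i) < 0)
  then (rdn F (alpha i) - rup F (alpha i)) * fine (l i) else 0.

Lemma rounded_coef_F : F 0 -> forall i, F (rounded_coef i).
Proof.
move=> F0 i; rewrite /rounded_coef.
case: ifPn => [/ex_rup_U/rup_F // | _].
by case: ifPn => [/ex_rdn_L/rdn_F // | _].
Qed.

Lemma rounded_coef_mul_le i (x : rat) :
  (l i <= x%:E)%E -> (x%:E <= u i)%E ->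
  rounded_coef i * x <= alpha i * x + up_slack i + down_slack i.
Proof.
move=> l_le le_u; rewrite /rounded_coef /up_slack /down_slack.
case: ifPn => iU.
  rewrite (disjointFr disjoint_UL iU) addr0 /=.
  apply: ler_round_up_mul; first exact/ltW/rup_gt/ex_rup_U.
    exact: le_fine le_u (U_bounded iU).
  by move=> u_gt0; apply/ltW/rdn_lt/ex_rdn_U.
case: ifPn => iL /=.
  rewrite addr0; apply: ler_round_down_mul; first exact/ltW/rdn_lt/ex_rdn_L.
    exact: fine_le l_le (L_bounded iL).
  by move=> l_lt0; apply/ltW/rup_gt/ex_rup_L.
by rewrite alpha_eq0 ?in_setU ?negb_or ?iU ?iL // !mul0r !addr0.
Qed.

Lemma sum_rounded_coef_mul_le (x : 'I_n -> rat) :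
  (forall i, (l i <= (x i)%:E)%E /\ ((x i)%:E <= u i)%E) ->
  \sum_(i < n) rounded_coef i * x i <=
    \sum_(i < n) alpha i * x i
    + \sum_(i in U | 0 < fine (u i)) (rup F (alpha i) - rdn F (alpha i)) * fine (u i)
    + \sum_(i in L | fine (l i) < 0) (rdn F (alpha i) - rup F (alpha i)) * fine (l i).
Proof.
move=> x_bounds; rewrite !(big_mkcond (fun i => _ && _)) -!big_split /=.
by apply: ler_sum => i _; case: (x_bounds i) => ? ?; exact: rounded_coef_mul_le.
Qed.

End RoundedCoefficients.

Theorem corollary1 (F : rat -> Prop) (F0 : F 0)
  (m n : nat) (A : 'I_m -> 'I_n -> rat) (c : 'I_n -> rat) (b : 'I_m -> rat)
  (l u : 'I_n -> \bar rat) (I : {set 'I_n})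
  (a g : 'I_n -> rat) (beta d lambda : rat)
  (Ha_valid : valid_ineq (mip_feasible A b l u I) a beta)
  (Hg_valid : valid_ineq (mip_feasible A b l u I) g d)
  (Ha_repr : F_repr F a beta) (Hg_repr : F_repr F g d)
  (Hlam_F : F lambda) (Hlam_pos : 0 < lambda)
  (U L : {set 'I_n}) (HUL : [disjoint U & L])
  (HU : forall i, i \in U -> (u i < +oo)%E)
  (HL : forall i, i \in L -> (-oo < l i)%E)
  (Hzero : forall i, i \notin U :|: L -> a i + lambda * g i = 0)
  (* existence of all roundings that occur *)
  (HexU : forall i, i \in U -> ex_rup F (a i + lambda * g i))
  (HexU' : forall i, i \in U -> (0 < fine (u i)) -> ex_rdn F (a i + lambda * g i))
  (HexL : forall i, i \in L -> ex_rdn F (a i + lambda * g i))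
  (HexL' : forall i, i \in L -> (fine (l i) < 0) -> ex_rup F (a i + lambda * g i))
  (Hexrhs : ex_rup F (beta + lambda * d
      + \sum_(i in U | 0 < fine (u i))
          (rup F (a i + lambda * g i) - rdn F (a i + lambda * g i)) * fine (u i)
      + \sum_(i in L | fine (l i) < 0)
          (rdn F (a i + lambda * g i) - rup F (a i + lambda * g i)) * fine (l i))) :
  let alpha := fun i => a i + lambda * g i in
  let gamma := fun i => if i \in U then rup F (alpha i)
                        else if i \in L then rdn F (alpha i) else 0 in
  let rhs := rup F (beta + lambda * d
      + \sum_(i in U | 0 < fine (u i)) (rup F (alpha i) - rdn F (alpha i)) * fine (u i)
      + \sum_(i in L | fine (l i) < 0) (rdn F (alpha i) - rup F (alpha i)) * fine (l i)) in
  F_repr F gamma rhs /\ valid_ineq (mip_feasible A b l u I) gamma rhs.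
Proof.
move=> alpha gamma rhs; split.
  by split; [exact: (@rounded_coef_F F n U L alpha HexU HexL F0) | exact: rup_F].
move=> x Px; have [_ [x_bounds _]] := Px.
have aggregate_valid := valid_ineq_aggregate Ha_valid Hg_valid (ltW Hlam_pos) Px.
apply/ltW/(le_lt_trans _ (rup_gt Hexrhs)).
apply: (le_trans (sum_rounded_coef_mul_le HUL HU HL Hzero HexU HexU' HexL HexL' x_bounds)).
by rewrite !lerD2r.
Qed.
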